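(* Let $G$ be a graph on $n$ vertices and let $m,k$ be integers with $1\leq m<k\leq n$. If $\psi_k(G)>0$, then $\psi_m(G)\geq \psi_k(G)+\left\lfloor\frac{k}{m}\right\rfloor-1$.
   Context: All graphs are finite, simple and nonempty. For a graph $G$ and a positive integer $k$, a $k$-path vertex cover ($k$-PVC) of $G$ is a set $S$ of vertices such that every path on $k$ vertices in $G$ contains at least one vertex of $S$ (if $G$ has no path on $k$ vertices, the empty set is a $k$-PVC). $\psi_k(G)$ denotes the minimum cardinality of a $k$-PVC of $G$. *)

From mathcomp Require Import all_boot.
Set Implicit Arguments. Unset Strict Implicit. Unset Printing Implicit Defensive.

Definition simple_graph (T : finType) (e : rel T) : Prop :=
  symmetric e /\ irreflexive e.

(* s is (the vertex sequence of) a path in the graph: distinct vertices,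
   consecutive ones adjacent.  A path on k vertices has size s = k. *)
Definition is_gpath (T : finType) (e : rel T) (s : seq T) : bool :=
  uniq s && (if s is x :: t then path e x t else true).

Definition is_kpvc (T : finType) (e : rel T) (k : nat) (S : {set T}) : bool :=
  [forall t : k.-tuple T, is_gpath e t ==> has (fun x => x \in S) t].

(* psi_k(G): minimum cardinality of a k-PVC (setT is always one for k >= 1). *)
Definition psi (T : finType) (e : rel T) (k : nat) : nat :=
  \big[minn/#|T|]_(S : {set T} | is_kpvc e k S) #|S|.

From mathcomp Require Import all_boot zify.

Set Implicit Arguments.
Unset Strict Implicit.
Unset Printing Implicit Defensive.

(* Cutting a path into consecutive blocks of m vertices shows that an m-path
   vertex cover S meets every path P at least |P| / m times.  Hence if S is an
   m-PVC, deleting fewer than k / m vertices of S still leaves a k-PVC.  When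
   |S| >= k / m - 1 this gives psi_k <= |S| - (k / m - 1); when |S| < k / m,
   deleting all of S shows that the empty set is a k-PVC, against psi_k > 0. *)

Lemma bigmin_leq_seq (I : eqType) (r : seq I) (P : pred I) (F : I -> nat) n0 j :
  j \in r -> P j -> \big[minn/n0]_(i <- r | P i) F i <= F j.
Proof.
elim: r => [|x r IHr] //= j_r Pj; rewrite big_cons.
have [<-|ne_jx] := eqVneq j x; first by rewrite Pj geq_minl.
move: j_r; rewrite in_cons (negbTE ne_jx) /= => j_r.
case: (P x); last exact: IHr.
exact: leq_trans (geq_minr _ _) (IHr j_r Pj).
Qed.

Section PathCover.
Variables (T : finType) (e : rel T).

Lemma gpath_cat (s1 s2 : seq T) :
  is_gpath e (s1 ++ s2) -> is_gpath e s1 && is_gpath e s2.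
Proof.
rewrite /is_gpath cat_uniq => /andP[/and3P[-> _ ->]] /=.
case: s1 => [|x t1] /=; first by case: s2.
rewrite cat_path => /andP[-> ] /=.
by case: s2 => [|y t2] //= /andP[_ ->].
Qed.

Lemma count_mem_uniq_leq_card (B : {set T}) (u : seq T) :
  uniq u -> count (mem B) u <= #|B|.
Proof.
move=> uniq_u; apply/card_geqP; exists (filter (mem B) u).
by rewrite filter_uniq ?size_filter //; split=> // x; rewrite mem_filter => /andP[].
Qed.

Lemma kpvc_setT (k : nat) : 0 < k -> is_kpvc e k [set: T].
Proof.
move=> k_gt0; apply/forallP => -[[|x s] /= /eqP size_s]; first by rewrite -size_s in k_gt0.
by apply/implyP => _; rewrite /= inE.
Qed.

Lemma kpvc_count_geq (m : nat) (S : {set T}) (s : seq T) :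
  0 < m -> is_kpvc e m S -> is_gpath e s -> size s %/ m <= count (mem S) s.
Proof.
move=> m_gt0 coverS; move: {2}(size s) (leqnn (size s)) => n.
elim: n s => [|n IHn] s size_s path_s.
  by move: size_s; rewrite leqn0 => /eqP->; rewrite div0n.
have [lt_s_m|le_m_s] := ltnP (size s) m; first by rewrite divn_small.
rewrite -(cat_take_drop m s) in path_s *.
case/andP: (gpath_cat path_s) => path_head path_tail.
have size_head : size (take m s) = m by rewrite size_takel.
have head_hits : 0 < count (mem S) (take m s).
  rewrite -has_count; have /eqP size_m := size_head.
  by move/forallP/(_ (Tuple size_m))/implyP: coverS; apply.
have := IHn (drop m s); rewrite size_drop => /(_ _ path_tail).
rewrite count_cat size_cat size_head size_drop divnDl ?dvdnn // divnn m_gt0.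
lia.
Qed.

Lemma kpvc_setD (m k : nat) (S B : {set T}) :
  0 < m -> is_kpvc e m S -> #|B| < k %/ m -> is_kpvc e k (S :\: B).
Proof.
move=> m_gt0 coverS small_B; apply/forallP => u; apply/implyP => path_u.
apply: contraT; rewrite has_count -leqNgt leqn0 => /eqP miss_SB.
have hits_S := kpvc_count_geq m_gt0 coverS path_u.
have hits_B := count_mem_uniq_leq_card B (andP path_u).1.
have hits_S_in_B : count (mem S) u <= count (mem B) u.
  rewrite -[count (mem B) u]add0n -miss_SB -count_predUI.
  apply: leq_trans (leq_addr _ _).
  by apply: sub_count => x; rewrite /= inE; case: (x \in B) => //= ->.
rewrite size_tuple in hits_S; lia.
Qed.

Lemma psi_leq_card (k : nat) (S : {set T}) : is_kpvc e k S -> psi e k <= #|S|.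
Proof.
by move=> coverS; apply: bigmin_leq_seq; rewrite ?mem_index_enum.
Qed.

Lemma psi_geq (k n : nat) :
  0 < k -> (forall S : {set T}, is_kpvc e k S -> n <= #|S|) -> n <= psi e k.
Proof.
move=> k_gt0 lb; apply: (big_ind (leq n)) => [||S /lb //].
- by rewrite -cardsT; apply/lb/kpvc_setT.
- by move=> x y nx ny; rewrite leq_min nx ny.
Qed.

Lemma psi_add_leq_kpvc (m k : nat) (S : {set T}) :
  0 < m -> m <= k -> 0 < psi e k -> is_kpvc e m S -> psi e k + k %/ m - 1 <= #|S|.
Proof.
move=> m_gt0 le_m_k psi_gt0 coverS.
have [small_S|] := ltnP #|S| (k %/ m).
  have := psi_leq_card (kpvc_setD m_gt0 coverS small_S).
  by rewrite setDv cards0 leqNgt psi_gt0.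
move=> /(leq_trans (leq_subr 1 _)) /card_geqP[s [uniq_s size_s sub_s]].
have card_B : #|[set x in s]| = k %/ m - 1.
  by rewrite cardsE (card_uniqP uniq_s) size_s.
have sub_B : [set x in s] \subset S by apply/subsetP => x; rewrite inE => /sub_s.
have small_B : #|[set x in s]| < k %/ m by rewrite card_B subn1 prednK ?divn_gt0.
have := psi_leq_card (kpvc_setD m_gt0 coverS small_B).
rewrite cardsD (setIidPr sub_B) card_B; lia.
Qed.

End PathCover.

Theorem mainTheorem5 (T : finType) (e : rel T) (m k : nat) :
  simple_graph e -> 0 < #|T| ->
  1 <= m -> m < k -> k <= #|T| ->
  0 < psi e k ->
  psi e k + k %/ m - 1 <= psi e m.
Proof.
move=> _ _ m_gt0 lt_m_k _ psi_gt0.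
apply: (psi_geq m_gt0) => S coverS.
exact: psi_add_leq_kpvc m_gt0 (ltnW lt_m_k) psi_gt0 coverS.
Qed.
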